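(* Let $X_0=0$ and $X_n=\sum_{j=1}^{X_{n-1}}\xi_{n,j}+\varepsilon_n$ for $n\ge 1$, where $\{\xi_{n,j},\varepsilon_n : n,j\in\mathbb N\}$ are independent nonnegative integer-valued random variables and, for each $n$, the $\xi_{n,j}$, $j\in\mathbb N$, are identically distributed. Let $G_n(x)=\mathbb E x^{\xi_{n,1}}$, $\rho_n=G_n'(1)=\mathbb E\xi_{n,1}$, and assume $G_n''(1)<\infty$ for all $n$. Assume that $\varepsilon_n\sim\mathrm{Bernoulli}(m_{n,1})$ and that (i) $\rho_n<1$ for all $n$, $\lim_{n\to\infty}\rho_n=1$, $\sum_{n=1}^\infty(1-\rho_n)=\infty$, and $\lim_{n\to\infty}G_n''(1)/(1-\rho_n)=0$; (ii) $\lim_{n\to\infty} m_{n,1}/(1-\rho_n)=\lambda$ for some $\lambda\ge 0$. Then $X_n$ converges in distribution to $\mathrm{Poisson}(\lambda)$.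
   Context: $\mathrm{Poisson}(0)$ denotes the point mass at $0$. $\mathrm{Bernoulli}(p)$ is the distribution with $\mathbb P(1)=p=1-\mathbb P(0)$. *)

(* classical reals. Laws of nonnegative-integer-valued random
   variables are represented by their probability mass functions nat -> R. *)
From Stdlib Require Import Reals Factorial.
Open Scope R_scope.

Definition is_pmf (p : nat -> R) : Prop :=
  (forall k, 0 <= p k) /\ infinite_sum p 1.

Definition delta0 (k : nat) : R := match k with O => 1 | _ => 0 end.

Definition bernoulli (q : R) (k : nat) : R :=
  match k with O => 1 - q | 1%nat => q | _ => 0 end.

(* Poisson(lam); for lam = 0 this is the point mass at 0 since 0^0 = 1 *)
Definition poisson (lam : R) (k : nat) : R :=
  exp (- lam) * lam ^ k / INR (fact k).

Definition convol (p q : nat -> R) (k : nat) : R :=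
  sum_f_R0 (fun i => p i * q (k - i)%nat) k.

Fixpoint convpow (p : nat -> R) (m : nat) : nat -> R :=
  match m with
  | O => delta0
  | S m' => convol (convpow p m') p
  end.

(* L n is the law of X_n, where X_0 = 0 and
   X_n = sum_{j=1}^{X_{n-1}} xi_{n,j} + eps_n, with all xi_{n,j}, eps_n
   independent, xi_{n,j} ~ xi n (for every j), eps_n ~ eps n.
   By independence (and the law of total probability conditioning on X_{n-1}):
   P(X_n = k) = sum_m P(X_{n-1} = m) * P(xi_{n,1}+...+xi_{n,m} + eps_n = k). *)
Definition is_BPI_law (xi eps : nat -> nat -> R) (L : nat -> nat -> R) : Prop :=
  L 0%nat = delta0 /\
  forall (n : nat) (k : nat),
    infinite_sum (fun m => L n m * convol (convpow (xi (S n)) m) (eps (S n)) k)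
                 (L (S n) k).

(* convergence in distribution of nat-valued variables with laws L n to the law
   p: convergence of the distribution functions P(X_n <= x) at every x (for
   nat-valued laws F(x) = F(floor x), so it suffices to take x = k in nat;
   non-integer x are the continuity points, and this is equivalent). *)
Definition conv_in_dist (L : nat -> nat -> R) (p : nat -> R) : Prop :=
  forall k : nat, Un_cv (fun n => sum_f_R0 (L n) k) (sum_f_R0 p k).

(* The proof works with probability generating functions on [0,1].  Writing
   F_n for the pgf of X_n, G_n for that of xi_{n,1} and B_n(s) = 1 - m_n + m_n s
   for that of eps_n, the recursion defining X_n yields
   F_n(s) = F_{n-1}(G_n(s)) B_n(s) (Fubini for nonnegative double series).
   Comparing with the Poisson pgfs exp (mu_n (s - 1)), where
   mu_n = rho_n mu_{n-1} + m_n, second-order Taylor bounds for G_n and for exp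
   give by induction |F_n(s) - exp (mu_n (s - 1))| <= w_n (1 - s) with
   w_n = rho_n w_{n-1} + mu_{n-1} G_n''(1) + m_n^2.  Both mu_n and w_n are
   relaxation sequences u_n = rho_n u_{n-1} + (1 - rho_n) a_n whose inputs a_n
   tend to lambda, resp. 0; since sum (1 - rho_n) = oo they converge to
   lambda, resp. 0.  Thus F_n -> exp (lambda (s - 1)) uniformly on [0,1], and
   uniform convergence of generating functions of bounded sequences on
   (0, 1/2] forces convergence of every coefficient, i.e. of P(X_n = k). *)

From Stdlib Require Import Reals Lra Lia Psatz Wf_nat.
From Coquelicot Require Import Coquelicot.
Open Scope R_scope.

(** Limits of sequences and series *)

Lemma Un_cv_const (c : R) : Un_cv (fun _ => c) c.
Proof.
  intros e He; exists O; intros n _.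
  unfold R_dist; rewrite Rminus_diag, Rabs_R0; exact He.
Qed.

Lemma Un_cv_le_const (u : nat -> R) (l c : R) :
  (forall n, u n <= c) -> Un_cv u l -> l <= c.
Proof. intros Hu Hl; exact (Rle_cv_lim Hu Hl (Un_cv_const c)). Qed.

Lemma Un_cv_abs_le (u : nat -> R) (l c : R) (N : nat) :
  Un_cv u l -> (forall n, (N <= n)%nat -> Rabs (u n) <= c) -> Rabs l <= c.
Proof.
  intros Hu Hc. destruct (Rle_dec (Rabs l) c) as [|Hgt]; [assumption|exfalso].
  destruct (Hu (Rabs l - c)) as [N' HN']; [lra|].
  specialize (HN' (N + N')%nat ltac:(lia)); specialize (Hc (N + N')%nat ltac:(lia)).
  unfold R_dist in HN'; rewrite Rabs_minus_sym in HN'.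
  pose proof (Rabs_triang_inv l (u (N + N')%nat)); lra.
Qed.

Lemma Un_cv_sum (f : nat -> nat -> R) (l : nat -> R) (K : nat) :
  (forall k, (k <= K)%nat -> Un_cv (fun n => f n k) (l k)) ->
  Un_cv (fun n => sum_f_R0 (f n) K) (sum_f_R0 l K).
Proof.
  intros H; induction K as [|K IH]; simpl; [apply H; lia|].
  apply CV_plus; [apply IH; intros k Hk|]; apply H; lia.
Qed.

Lemma series_ext (f g : nat -> R) (l : R) :
  (forall k, f k = g k) -> infinite_sum f l -> infinite_sum g l.
Proof.
  intros H Hf; apply (Un_cv_ext (sum_f_R0 f)); [|exact Hf].
  intros n; apply sum_eq; auto.
Qed.

Lemma series_scal (f : nat -> R) (l c : R) :
  infinite_sum f l -> infinite_sum (fun k => f k * c) (l * c).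
Proof.
  intros H.
  apply (Un_cv_ext (fun n => sum_f_R0 f n * c)).
  - intros n; rewrite Rmult_comm, scal_sum; reflexivity.
  - exact (CV_mult _ _ _ _ H (Un_cv_const c)).
Qed.

Lemma series_plus (f g : nat -> R) (a b : R) :
  infinite_sum f a -> infinite_sum g b ->
  infinite_sum (fun k => f k + g k) (a + b).
Proof.
  intros Ha Hb.
  apply (Un_cv_ext (fun n => sum_f_R0 f n + sum_f_R0 g n)).
  - intros n; symmetry; apply plus_sum.
  - exact (CV_plus _ _ _ _ Ha Hb).
Qed.

Lemma series_minus (f g : nat -> R) (a b : R) :
  infinite_sum f a -> infinite_sum g b ->
  infinite_sum (fun k => f k - g k) (a - b).
Proof.
  intros Ha Hb.
  apply (Un_cv_ext (fun n => sum_f_R0 f n - sum_f_R0 g n)).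
  - intros n; symmetry; apply minus_sum.
  - exact (CV_minus _ _ _ _ Ha Hb).
Qed.

Lemma series_le (f g : nat -> R) (a b : R) :
  (forall k, f k <= g k) -> infinite_sum f a -> infinite_sum g b -> a <= b.
Proof. intros H Ha Hb; exact (Rle_cv_lim (fun n => sum_Rle _ _ n (fun k _ => H k)) Ha Hb). Qed.

Lemma series_nonneg (f : nat -> R) (l : R) :
  (forall k, 0 <= f k) -> infinite_sum f l -> 0 <= l.
Proof. intros H Hl; apply (Rle_trans _ (sum_f_R0 f 0)); [apply H|apply sum_incr; auto]. Qed.

Lemma series_term_le (f : nat -> R) (l : R) (k : nat) :
  (forall k, 0 <= f k) -> infinite_sum f l -> f k <= l.
Proof.
  intros H Hl; apply (Rle_trans _ (sum_f_R0 f k)); [|apply sum_incr; auto].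
  destruct k; simpl; [lra|]. pose proof (cond_pos_sum f k H); lra.
Qed.

Lemma series_finite (f : nat -> R) (K : nat) :
  (forall k, (K < k)%nat -> f k = 0) -> infinite_sum f (sum_f_R0 f K).
Proof.
  intros H e He; exists K; intros n Hn.
  replace (sum_f_R0 f n) with (sum_f_R0 f K).
  { unfold R_dist; rewrite Rminus_diag, Rabs_R0; exact He. }
  induction Hn as [|n Hn IH]; [reflexivity|].
  simpl; rewrite <- IH, H; [ring|lia].
Qed.

Lemma sum_f_R0_swap (a : nat -> nat -> R) (M K : nat) :
  sum_f_R0 (fun m => sum_f_R0 (a m) K) M
  = sum_f_R0 (fun k => sum_f_R0 (fun m => a m k) M) K.
Proof. induction M; simpl; [reflexivity|]. rewrite IHM, <- plus_sum; reflexivity. Qed.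

Lemma series_fubini_nonneg (a : nat -> nat -> R) (row col : nat -> R) (B : R) :
  (forall m k, 0 <= a m k) ->
  (forall m, infinite_sum (a m) (row m)) ->
  (forall k, infinite_sum (fun m => a m k) (col k)) ->
  infinite_sum row B -> infinite_sum col B.
Proof.
  intros Ha Hrow Hcol HB.
  assert (Hcol0 : forall k, 0 <= col k)
    by (intros k; apply (series_nonneg (fun m => a m k)); auto).
  assert (Hrow0 : forall m, 0 <= row m) by (intros m; apply (series_nonneg (a m)); auto).
  assert (Hgrow : Un_growing (sum_f_R0 col))
    by (intros n; simpl; specialize (Hcol0 (S n)); lra).
  assert (Hub : forall K, sum_f_R0 col K <= B).
  { intros K. apply (Un_cv_le_const (fun M => sum_f_R0 (fun k => sum_f_R0 (fun m => a m k) M) K));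
      [|apply Un_cv_sum; intros k _; apply Hcol].
    intros M; rewrite <- sum_f_R0_swap.
    apply (Rle_trans _ (sum_f_R0 row M)); [|apply sum_incr; auto].
    apply sum_Rle; intros m _; apply sum_incr; [apply Hrow|apply Ha]. }
  destruct (growing_cv _ Hgrow) as [C HC].
  { exists B; intros x [K ->]; auto. }
  assert (HBC : B <= C).
  { apply (Un_cv_le_const (sum_f_R0 row)); auto. intros M.
    apply (Un_cv_le_const (fun K => sum_f_R0 (fun m => sum_f_R0 (a m) K) M));
      [|apply Un_cv_sum; intros m _; apply Hrow].
    intros K; rewrite sum_f_R0_swap.
    apply (Rle_trans _ (sum_f_R0 col K)); [|apply growing_ineq; auto].
    apply sum_Rle; intros k _; apply sum_incr; [apply Hcol|intros; apply Ha]. }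
  assert (HCB : C <= B) by (apply (Un_cv_le_const (sum_f_R0 col)); auto).
  replace B with C by lra; exact HC.
Qed.

(** Probability generating functions *)

Definition pgf (p : nat -> R) (s v : R) : Prop :=
  infinite_sum (fun k => p k * s ^ k) v.

Lemma pow_unit_interval (s : R) (k : nat) : 0 <= s <= 1 -> 0 <= s ^ k <= 1.
Proof. intros Hs; induction k; simpl; nra. Qed.

Lemma pmf_pgf_exists (p : nat -> R) (s : R) :
  is_pmf p -> 0 <= s <= 1 -> exists G, pgf p s G /\ 0 <= G <= 1.
Proof.
  intros [Hp0 Hp1] Hs.
  assert (Ht : forall k, 0 <= p k * s ^ k <= p k).
  { intros k; pose proof (pow_unit_interval s k Hs); specialize (Hp0 k); nra. }
  destruct (growing_cv (sum_f_R0 (fun k => p k * s ^ k))) as [G HG].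
  - intros n; destruct (Ht (S n)); simpl in *; lra.
  - exists 1; intros x [K ->].
    apply (Rle_trans _ (sum_f_R0 p K)); [|apply sum_incr; auto].
    apply sum_Rle; intros; apply Ht.
  - exists G; repeat split.
    + exact HG.
    + apply (series_nonneg (fun k => p k * s ^ k)); auto; apply Ht.
    + apply (series_le (fun k => p k * s ^ k) p); auto; apply Ht.
Qed.

Lemma delta0_nonneg (k : nat) : 0 <= delta0 k.
Proof. destruct k; simpl; lra. Qed.

Lemma bernoulli_nonneg (q : R) (k : nat) : 0 <= q <= 1 -> 0 <= bernoulli q k.
Proof. intros; destruct k as [|[|k]]; simpl; lra. Qed.

Lemma poisson_nonneg (lam : R) (k : nat) : 0 <= lam -> 0 <= poisson lam k.
Proof.
  intros Hlam; unfold poisson, Rdiv.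
  apply Rmult_le_pos; [apply Rmult_le_pos; [left; apply exp_pos|apply pow_le; auto]|].
  left; apply Rinv_0_lt_compat, INR_fact_lt_0.
Qed.

Lemma convol_nonneg (p q : nat -> R) (k : nat) :
  (forall k, 0 <= p k) -> (forall k, 0 <= q k) -> 0 <= convol p q k.
Proof. intros Hp Hq; apply cond_pos_sum; intros; apply Rmult_le_pos; auto. Qed.

Lemma convpow_nonneg (p : nat -> R) (m k : nat) :
  (forall k, 0 <= p k) -> 0 <= convpow p m k.
Proof.
  intros Hp; revert k; induction m; intros k; simpl;
    [apply delta0_nonneg|apply convol_nonneg; auto].
Qed.

(* The pgf of a convolution is the product of the pgfs (Cauchy product of
   absolutely convergent series). *)
Lemma pgf_convol (p q : nat -> R) (s P Q : R) :
  (forall k, 0 <= p k) -> (forall k, 0 <= q k) -> 0 <= s ->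
  pgf p s P -> pgf q s Q -> pgf (convol p q) s (P * Q).
Proof.
  intros Hp Hq Hs HP HQ.
  assert (Habs : forall (r : nat -> R) (l : R), (forall k, 0 <= r k) ->
            pgf r s l -> ex_series (fun k => Rabs (r k * s ^ k))).
  { intros r l Hr Hl; exists l; apply is_series_Reals.
    apply (series_ext (fun k => r k * s ^ k)); [|exact Hl].
    intros k; rewrite Rabs_pos_eq; [reflexivity|].
    apply Rmult_le_pos; [apply Hr|apply pow_le; exact Hs]. }
  pose proof (is_series_mult (fun k => p k * s ^ k) (fun k => q k * s ^ k) P Q) as Hmult.
  rewrite !is_series_Reals in Hmult.
  specialize (Hmult HP HQ (Habs p P Hp HP) (Habs q Q Hq HQ)).
  refine (series_ext _ _ _ _ Hmult); intros k.
  unfold convol; rewrite Rmult_comm, scal_sum.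
  apply sum_eq; intros i Hi.
  replace (s ^ k) with (s ^ i * s ^ (k - i)) by (rewrite <- pow_add; f_equal; lia).
  ring.
Qed.

Lemma pgf_finite (p : nat -> R) (s : R) (K : nat) :
  (forall k, (K < k)%nat -> p k = 0) -> pgf p s (sum_f_R0 (fun k => p k * s ^ k) K).
Proof. intros H; apply series_finite; intros k Hk; rewrite H by exact Hk; ring. Qed.

Lemma pgf_delta0 (s : R) : pgf delta0 s 1.
Proof.
  replace 1 with (sum_f_R0 (fun k => delta0 k * s ^ k) 0) by (simpl; ring).
  apply pgf_finite; intros [|k] Hk; [lia|reflexivity].
Qed.

Lemma pgf_bernoulli (q s : R) : pgf (bernoulli q) s (1 - q + q * s).
Proof.
  replace (1 - q + q * s) with (sum_f_R0 (fun k => bernoulli q k * s ^ k) 1) by (simpl; ring).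
  apply pgf_finite; intros [|[|k]] Hk; [lia|lia|reflexivity].
Qed.

Lemma pgf_poisson (lam s : R) : pgf (poisson lam) s (exp (lam * (s - 1))).
Proof.
  pose proof (proj2_sig (exist_exp (lam * s))) as Hexp.
  change (exp_in (lam * s) (exp (lam * s))) in Hexp.
  apply (series_scal _ _ (exp (- lam))) in Hexp.
  replace (exp (lam * (s - 1))) with (exp (lam * s) * exp (- lam))
    by (rewrite <- exp_plus; f_equal; ring).
  refine (series_ext _ _ _ _ Hexp); intros k.
  unfold poisson, Rdiv; rewrite Rpow_mult_distr; ring.
Qed.

Lemma pgf_convpow (p : nat -> R) (s G : R) (m : nat) :
  (forall k, 0 <= p k) -> 0 <= s -> pgf p s G -> pgf (convpow p m) s (G ^ m).
Proof.
  intros Hp Hs HG; induction m as [|m IH]; simpl; [apply pgf_delta0|].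
  rewrite Rmult_comm; apply pgf_convol; auto.
  intros k; apply convpow_nonneg; exact Hp.
Qed.

Lemma pgf_one_term_le (p : nat -> R) (k : nat) :
  (forall k, 0 <= p k) -> pgf p 1 1 -> p k <= 1.
Proof.
  intros Hp H; replace (p k) with (p k * 1 ^ k) by (rewrite pow1; ring).
  apply (series_term_le (fun k => p k * 1 ^ k)); [|exact H].
  intros j; rewrite pow1, Rmult_1_r; apply Hp.
Qed.

Lemma poisson_le_1 (lam : R) (k : nat) : 0 <= lam -> poisson lam k <= 1.
Proof.
  intros Hlam; apply pgf_one_term_le; [intros j; apply poisson_nonneg; exact Hlam|].
  pose proof (pgf_poisson lam 1) as H.
  rewrite Rminus_diag, Rmult_0_r, exp_0 in H; exact H.
Qed.

(** Elementary inequalities *)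

Lemma one_minus_pow_le (s : R) (k : nat) :
  0 <= s <= 1 -> 1 - s ^ k <= INR k * (1 - s).
Proof.
  intros Hs; induction k as [|k IH]; [simpl; lra|].
  rewrite S_INR; pose proof (pow_unit_interval s k Hs); simpl; nra.
Qed.

Lemma pow_second_order (s : R) (k : nat) :
  0 <= s <= 1 -> 0 <= s ^ k - 1 + INR k * (1 - s) <= INR k * INR (k - 1) * (1 - s).
Proof.
  intros Hs.
  assert (H : 0 <= s ^ k - 1 + INR k * (1 - s) <= INR k * (INR k - 1) * (1 - s)).
  { induction k as [|k IH]; [simpl; lra|].
    pose proof (one_minus_pow_le s k Hs); pose proof (pow_unit_interval s k Hs).
    pose proof (pos_INR k); rewrite S_INR; simpl; nra. }
  destruct k as [|k]; [simpl; lra|].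
  replace (S k - 1)%nat with k by lia; rewrite S_INR in *.
  replace (INR k + 1 - 1) with (INR k) in H by ring; exact H.
Qed.

Lemma pgf_taylor (p : nat -> R) (rho g2 s G : R) :
  is_pmf p ->
  infinite_sum (fun k => INR k * p k) rho ->
  infinite_sum (fun k => INR k * INR (k - 1) * p k) g2 ->
  0 <= s <= 1 -> pgf p s G ->
  1 - G <= rho * (1 - s) /\ Rabs (G - 1 - rho * (s - 1)) <= g2 * (1 - s).
Proof.
  intros [Hp0 Hp1] Hrho Hg2 Hs HG; split.
  - apply (series_le (fun k => p k - p k * s ^ k) (fun k => INR k * p k * (1 - s))).
    + intros k; pose proof (one_minus_pow_le s k Hs); specialize (Hp0 k); nra.
    + apply series_minus; assumption.
    + apply series_scal; assumption.
  - set (t := fun k => p k * s ^ k - p k + INR k * p k * (1 - s)).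
    assert (Ht : infinite_sum t (G - 1 + rho * (1 - s)))
      by (apply series_plus; [apply series_minus|apply series_scal]; assumption).
    assert (Hbounds : forall k, 0 <= t k <= INR k * INR (k - 1) * p k * (1 - s))
      by (intros k; pose proof (pow_second_order s k Hs); specialize (Hp0 k); unfold t; nra).
    assert (0 <= G - 1 + rho * (1 - s))
      by (apply (series_nonneg t); [apply Hbounds|exact Ht]).
    assert (G - 1 + rho * (1 - s) <= g2 * (1 - s))
      by (apply (series_le t _ _ _ (fun k => proj2 (Hbounds k)) Ht); apply series_scal; exact Hg2).
    rewrite Rabs_pos_eq; lra.
Qed.

Lemma exp_le_mono (x y : R) : x <= y -> exp x <= exp y.
Proof. intros [Hlt| ->]; [left; apply exp_increasing; exact Hlt|lra]. Qed.

Lemma exp_nonpos_le_1 (x : R) : x <= 0 -> exp x <= 1.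
Proof. intros Hx; rewrite <- exp_0; apply exp_le_mono; exact Hx. Qed.

Lemma exp_lipschitz (u v : R) : u <= 0 -> v <= 0 -> Rabs (exp u - exp v) <= Rabs (u - v).
Proof.
  assert (Hle : forall a b, a <= b -> b <= 0 -> 0 <= exp b - exp a <= b - a).
  { intros a b Hab Hb.
    replace (exp a) with (exp b * exp (a - b)) by (rewrite <- exp_plus; f_equal; ring).
    pose proof (exp_ineq1_le (a - b)); pose proof (exp_pos b).
    pose proof (exp_nonpos_le_1 b Hb); pose proof (exp_nonpos_le_1 (a - b) ltac:(lra)).
    nra. }
  intros Hu Hv; destruct (Rle_dec u v) as [Huv|Hvu].
  - pose proof (Hle u v Huv Hv); rewrite !Rabs_left1; lra.
  - pose proof (Hle v u ltac:(lra) Hu); rewrite !Rabs_pos_eq; lra.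
Qed.

Lemma exp_param_lipschitz (a b s : R) :
  0 <= a -> 0 <= b -> 0 <= s <= 1 ->
  Rabs (exp (a * (s - 1)) - exp (b * (s - 1))) <= Rabs (a - b).
Proof.
  intros Ha Hb Hs.
  apply (Rle_trans _ (Rabs (a * (s - 1) - b * (s - 1)))); [apply exp_lipschitz; nra|].
  replace (a * (s - 1) - b * (s - 1)) with ((a - b) * (s - 1)) by ring.
  rewrite Rabs_mult, (Rabs_left1 (s - 1)) by lra.
  pose proof (Rabs_pos (a - b)); nra.
Qed.

Lemma exp_second_order (x : R) : 0 <= x -> Rabs ((1 - x) - exp (- x)) <= x ^ 2.
Proof.
  intros Hx.
  pose proof (exp_ineq1_le (- x)); pose proof (exp_ineq1_le x).
  assert (exp (- x) * exp x = 1)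
    by (rewrite <- exp_plus; replace (- x + x) with 0 by ring; apply exp_0).
  pose proof (exp_pos (- x)); pose proof (exp_pos x).
  assert (exp (- x) * (1 + x) <= 1) by nra.
  rewrite Rabs_left1 by lra; simpl; nra.
Qed.

(** The one-generation estimate *)

(* Suppose v (the pgf of X_{n-1} at t = G(s)) is within w (1 - t) of
   exp (mu (t - 1)).  Then v B(s), with B(s) = 1 - m + m s the immigration
   pgf, is within w' (1 - s) of exp (mu' (s - 1)), where
   mu' = rho mu + m and w' = rho w + mu g2 + m^2.  The three error terms come
   from the induction hypothesis, the Taylor expansion of G, and replacing
   B(s) by exp (m (s - 1)). *)
Lemma pgf_error_step (v G rho mu m g2 w s : R) :
  0 <= s <= 1 -> 0 <= G <= 1 -> 1 - G <= rho * (1 - s) ->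
  Rabs (G - 1 - rho * (s - 1)) <= g2 * (1 - s) ->
  0 <= rho -> 0 <= mu -> 0 <= w -> 0 <= m <= 1 ->
  Rabs (v - exp (mu * (G - 1))) <= w * (1 - G) ->
  Rabs (v * (1 - m + m * s) - exp ((rho * mu + m) * (s - 1)))
    <= (rho * w + mu * g2 + m ^ 2) * (1 - s).
Proof.
  intros Hs HG HG1 HG2 Hrho Hmu Hw Hm Hv.
  set (B := 1 - m + m * s); set (a := exp (mu * (G - 1))).
  set (a' := exp (mu * rho * (s - 1))); set (b' := exp (m * (s - 1))).
  assert (HB : 0 <= B <= 1) by (unfold B; nra).
  assert (Ha'01 : 0 <= a' <= 1).
  { split; [left; apply exp_pos|apply exp_nonpos_le_1].
    assert (0 <= mu * rho) by nra; nra. }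
  replace (exp ((rho * mu + m) * (s - 1))) with (a' * b')
    by (unfold a', b'; rewrite <- exp_plus; f_equal; ring).
  assert (Hva : Rabs (v - a) <= w * rho * (1 - s)).
  { apply (Rle_trans _ _ _ Hv); rewrite Rmult_assoc; apply Rmult_le_compat_l; assumption. }
  assert (Haa' : Rabs (a - a') <= mu * g2 * (1 - s)).
  { unfold a, a'; apply (Rle_trans _ (Rabs (mu * (G - 1 - rho * (s - 1))))).
    { replace (mu * (G - 1 - rho * (s - 1))) with (mu * (G - 1) - mu * rho * (s - 1)) by ring.
      apply exp_lipschitz; nra. }
    rewrite Rabs_mult, Rabs_pos_eq, Rmult_assoc by exact Hmu.
    apply Rmult_le_compat_l; assumption. }
  assert (HBb' : Rabs (B - b') <= m ^ 2 * (1 - s)).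
  { unfold B, b'.
    replace (1 - m + m * s) with (1 - m * (1 - s)) by ring.
    replace (m * (s - 1)) with (- (m * (1 - s))) by ring.
    apply (Rle_trans _ ((m * (1 - s)) ^ 2)); [apply exp_second_order; nra|].
    assert (0 <= m * m) by nra; assert ((1 - s) * (1 - s) <= 1 - s) by nra.
    simpl; nra. }
  replace (v * B - a' * b') with ((v - a) * B + (a - a') * B + a' * (B - b')) by ring.
  pose proof (Rabs_triang ((v - a) * B + (a - a') * B) (a' * (B - b'))).
  pose proof (Rabs_triang ((v - a) * B) ((a - a') * B)).
  rewrite !Rabs_mult, (Rabs_pos_eq B), (Rabs_pos_eq a') in * by lra.
  pose proof (Rabs_pos (v - a)); pose proof (Rabs_pos (a - a')); pose proof (Rabs_pos (B - b')).
  nra.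
Qed.

(** Relaxation sequences *)

(* One averaging step x |-> r x + (1 - r) a, with a within h of A, shrinks
   the excess max(|x - A| - h, 0) by the factor r <= exp (- (1 - r)). *)
Lemma excess_contraction (r x a A h : R) :
  0 <= r <= 1 -> Rabs (a - A) <= h ->
  Rmax (Rabs (r * x + (1 - r) * a - A) - h) 0
    <= exp (- (1 - r)) * Rmax (Rabs (x - A) - h) 0.
Proof.
  intros Hr Ha.
  assert (Hdist : Rabs (r * x + (1 - r) * a - A) <= r * Rabs (x - A) + (1 - r) * h).
  { replace (r * x + (1 - r) * a - A) with (r * (x - A) + (1 - r) * (a - A)) by ring.
    apply (Rle_trans _ _ _ (Rabs_triang _ _)).
    rewrite !Rabs_mult, (Rabs_pos_eq r), (Rabs_pos_eq (1 - r)) by lra.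
    apply Rplus_le_compat_l, Rmult_le_compat_l; lra. }
  set (z := Rmax (Rabs (x - A) - h) 0).
  assert (Hz : Rabs (x - A) - h <= z /\ 0 <= z) by (split; [apply Rmax_l|apply Rmax_r]).
  assert (Hexp : r <= exp (- (1 - r))) by (pose proof (exp_ineq1_le (- (1 - r))); lra).
  apply Rmax_lub; [|apply Rmult_le_pos; [left; apply exp_pos|apply Hz]].
  assert (r * (Rabs (x - A) - h) <= r * z) by (apply Rmult_le_compat_l; lra).
  assert (r * z <= exp (- (1 - r)) * z) by (apply Rmult_le_compat_r; lra).
  lra.
Qed.

Lemma decay_iterate (Z P : nat -> R) (N : nat) :
  (forall n, (N <= n)%nat -> Z (S n) <= exp (- (P (S n) - P n)) * Z n) ->
  forall k, Z (N + k)%nat <= Z N * exp (- (P (N + k)%nat - P N)).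
Proof.
  intros Hstep k; induction k as [|k IH].
  - rewrite Nat.add_0_r, Rminus_diag, Ropp_0, exp_0; lra.
  - rewrite Nat.add_succ_r.
    apply (Rle_trans _ _ _ (Hstep (N + k)%nat ltac:(lia))).
    replace (- (P (S (N + k)) - P N)) with (- (P (S (N + k)) - P (N + k)%nat) + - (P (N + k)%nat - P N))
      by ring.
    rewrite exp_plus; pose proof (exp_pos (- (P (S (N + k)) - P (N + k)%nat))); nra.
Qed.

Lemma relaxation_limit (r a u : nat -> R) (A : R) :
  (forall n, 0 <= r (S n) <= 1) ->
  cv_infty (fun N => sum_f_R0 (fun i => 1 - r (S i)) N) ->
  Un_cv a A ->
  (forall n, u (S n) = r (S n) * u n + (1 - r (S n)) * a (S n)) ->
  Un_cv u A.
Proof.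
  intros Hr Hdiv Ha Hu e He.
  set (P := fun N => sum_f_R0 (fun i => 1 - r (S i)) N).
  set (Z := fun n => Rmax (Rabs (u (S n) - A) - e / 2) 0).
  destruct (Ha (e / 2)) as [N HN]; [lra|].
  assert (Hdecay : forall k, Z (N + k)%nat <= Z N * exp (- (P (N + k)%nat - P N))).
  { apply decay_iterate; intros n Hn; unfold Z.
    rewrite (Hu (S n)).
    replace (P (S n) - P n) with (1 - r (S (S n))) by (unfold P; simpl; ring).
    apply excess_contraction; [apply Hr|left; apply HN; lia]. }
  assert (HZ : 0 <= Z N) by apply Rmax_r.
  set (eta := e / (2 * (Z N + 1))).
  assert (Heta : 0 < eta) by (apply Rdiv_lt_0_compat; lra).
  assert (HZeta : Z N * eta < e / 2).
  { unfold eta; apply (Rmult_lt_reg_r (2 * (Z N + 1))); [lra|].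
    replace (Z N * (e / (2 * (Z N + 1))) * (2 * (Z N + 1))) with (Z N * e) by (field; lra).
    nra. }
  destruct (Hdiv (P N - ln eta)) as [K HK].
  exists (S (N + K)); intros n Hn.
  replace n with (S (N + (n - S N)))%nat by lia.
  set (k := (n - S N)%nat).
  assert (Hsmall : exp (- (P (N + k)%nat - P N)) < eta).
  { rewrite <- (exp_ln eta) by exact Heta; apply exp_increasing.
    specialize (HK (N + k)%nat ltac:(unfold k; lia)); fold (P (N + k)%nat) in HK; lra. }
  specialize (Hdecay k).
  assert (Z N * exp (- (P (N + k)%nat - P N)) <= Z N * eta)
    by (apply Rmult_le_compat_l; lra).
  assert (Rabs (u (S (N + k)) - A) - e / 2 <= Z (N + k)%nat) by apply Rmax_l.
  unfold R_dist; lra.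
Qed.

(** Recovering coefficients from generating functions *)

Lemma geometric_sum_le_2 (s : R) (M : nat) : 0 <= s <= 1/2 -> sum_f_R0 (pow s) M <= 2.
Proof.
  intros Hs; rewrite tech3 by lra.
  pose proof (pow_unit_interval s (S M) ltac:(lra)).
  apply (Rmult_le_reg_r (1 - s)); [lra|].
  unfold Rdiv; rewrite Rmult_assoc, Rinv_l by lra; nra.
Qed.

Lemma pgf_tail_bound (d : nat -> R) (s D : R) (k : nat) :
  (forall j, Rabs (d j) <= 2) -> 0 <= s <= 1/2 -> pgf d s D ->
  Rabs (D - sum_f_R0 (fun j => d j * s ^ j) k) <= 4 * s ^ S k.
Proof.
  intros Hd Hs HD.
  set (S_ := sum_f_R0 (fun j => d j * s ^ j)).
  apply (Un_cv_abs_le (fun n => S_ n - S_ k) _ _ (S k)); [exact (CV_minus _ _ _ _ HD (Un_cv_const _))|].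
  intros n Hn; unfold S_; rewrite (tech2 _ k n) by lia.
  replace (sum_f_R0 (fun j => d j * s ^ j) k
           + sum_f_R0 (fun i => d (S k + i)%nat * s ^ (S k + i)) (n - S k)
           - sum_f_R0 (fun j => d j * s ^ j) k)
    with (sum_f_R0 (fun i => d (S k + i)%nat * s ^ (S k + i)) (n - S k)) by ring.
  apply (Rle_trans _ _ _ (sum_f_R0_triangle _ _)).
  apply (Rle_trans _ (sum_f_R0 (fun i => s ^ i * (2 * s ^ S k)) (n - S k))).
  - apply sum_Rle; intros i _.
    pose proof (pow_le s (S k) ltac:(lra)); pose proof (pow_le s i ltac:(lra)).
    rewrite Rabs_mult, pow_add, (Rabs_pos_eq (s ^ S k * s ^ i)) by (apply Rmult_le_pos; assumption).
    pose proof (Hd (S k + i)%nat); pose proof (Rabs_pos (d (S k + i)%nat)).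
    assert (0 <= s ^ S k * s ^ i) by (apply Rmult_le_pos; assumption).
    nra.
  - rewrite <- scal_sum.
    pose proof (geometric_sum_le_2 s (n - S k) Hs); pose proof (pow_le s (S k) ltac:(lra)).
    nra.
Qed.

Lemma partial_sum_drop_last (d : nat -> R) (s : R) (k : nat) :
  0 <= s <= 1 ->
  Rabs (sum_f_R0 (fun j => d j * s ^ j) k - d k * s ^ k)
    <= sum_f_R0 (fun j => Rabs (d j)) k - Rabs (d k).
Proof.
  intros Hs; destruct k as [|k]; simpl.
  - rewrite !Rminus_diag, Rabs_R0; lra.
  - replace (sum_f_R0 (fun j => d j * s ^ j) k + d (S k) * (s * s ^ k) - d (S k) * (s * s ^ k))
      with (sum_f_R0 (fun j => d j * s ^ j) k) by ring.
    replace (sum_f_R0 (fun j => Rabs (d j)) k + Rabs (d (S k)) - Rabs (d (S k)))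
      with (sum_f_R0 (fun j => Rabs (d j)) k) by ring.
    apply (Rle_trans _ _ _ (sum_f_R0_triangle _ _)); apply sum_Rle; intros j _.
    pose proof (pow_unit_interval s j Hs); pose proof (Rabs_pos (d j)).
    rewrite Rabs_mult, (Rabs_pos_eq (s ^ j)) by lra; nra.
Qed.

(* If the generating functions of uniformly bounded sequences d_n tend to 0
   uniformly on (0, 1/2], then every coefficient d_n k tends to 0: isolate
   s^k d_n k, the earlier coefficients being small by induction and the tail
   being O(s^(k+1)). *)
Lemma coefficients_cv (d : nat -> nat -> R) (delta : nat -> R) :
  (forall n j, Rabs (d n j) <= 2) -> Un_cv delta 0 ->
  (forall n s, 0 < s <= 1/2 -> exists D, pgf (d n) s D /\ Rabs D <= delta n) ->
  forall k, Un_cv (fun n => d n k) 0.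
Proof.
  intros Hd Hdelta HD k; induction k as [k IH] using lt_wf_ind.
  set (V := fun n => sum_f_R0 (fun j => Rabs (d n j)) k - Rabs (d n k)).
  assert (HV : Un_cv V 0).
  { destruct k as [|k]; unfold V; simpl.
    - apply (Un_cv_ext (fun _ => 0)); [intros n; ring|apply Un_cv_const].
    - apply (Un_cv_ext (fun n => sum_f_R0 (fun j => Rabs (d n j)) k)); [intros n; ring|].
      rewrite <- (Rmult_0_l (INR (S k))), <- (sum_cte 0 k).
      apply Un_cv_sum; intros j Hj; rewrite <- Rabs_R0.
      apply cv_cvabs, IH; lia. }
  assert (Hbound : forall n s, 0 < s <= 1/2 ->
            s ^ k * Rabs (d n k) <= delta n + V n + 4 * s ^ S k).
  { intros n s Hs; destruct (HD n s Hs) as [D [HDs HDle]].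
    pose proof (pgf_tail_bound (d n) s D k (Hd n) ltac:(lra) HDs) as Htail.
    pose proof (partial_sum_drop_last (d n) s k ltac:(lra)) as Hdrop; fold (V n) in Hdrop.
    set (S_ := sum_f_R0 (fun j => d n j * s ^ j) k) in *.
    replace (s ^ k * Rabs (d n k)) with (Rabs (d n k * s ^ k))
      by (rewrite Rabs_mult, (Rabs_pos_eq (s ^ k)) by (apply pow_le; lra); ring).
    replace (d n k * s ^ k) with (D + - (D - S_) + - (S_ - d n k * s ^ k)) by ring.
    pose proof (Rabs_triang (D + - (D - S_)) (- (S_ - d n k * s ^ k))).
    pose proof (Rabs_triang D (- (D - S_))).
    rewrite !Rabs_Ropp in *; lra. }
  intros e He.
  set (s := Rmin (1/2) (e / 8)).
  assert (Hs : 0 < s <= 1/2) by (unfold s; split; [apply Rmin_glb_lt|apply Rmin_l]; lra).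
  assert (Hs8 : s <= e / 8) by apply Rmin_r.
  assert (Hsk : 0 < s ^ k) by (apply pow_lt; lra).
  destruct (CV_plus _ _ _ _ Hdelta HV (s ^ k * (e / 2))) as [N HN]; [nra|].
  exists N; intros n Hn; specialize (HN n Hn); specialize (Hbound n s Hs).
  unfold R_dist in *; rewrite Rplus_0_r, Rminus_0_r in *.
  pose proof (Rle_abs (delta n + V n)).
  assert (4 * s ^ S k <= s ^ k * (e / 2)) by (simpl; nra).
  apply (Rmult_lt_reg_l (s ^ k)); [exact Hsk|lra].
Qed.

(** The branching process with immigration *)

Fixpoint poisson_param (rho m1 : nat -> R) (n : nat) : R :=
  match n with
  | O => 0
  | S n' => rho (S n') * poisson_param rho m1 n' + m1 (S n')
  end.

Fixpoint error_bound (rho m1 g2 : nat -> R) (n : nat) : R :=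
  match n with
  | O => 0
  | S n' => rho (S n') * error_bound rho m1 g2 n'
            + poisson_param rho m1 n' * g2 (S n') + m1 (S n') ^ 2
  end.

Section BranchingWithImmigration.

Variables (xi : nat -> nat -> R) (m1 rho g2 : nat -> R) (lam : R) (L : nat -> nat -> R).

Hypothesis Hxi : forall n, (1 <= n)%nat -> is_pmf (xi n).
Hypothesis Hm1 : forall n, (1 <= n)%nat -> 0 <= m1 n <= 1.
Hypothesis Hrho : forall n, (1 <= n)%nat -> infinite_sum (fun k => INR k * xi n k) (rho n).
Hypothesis Hg2 : forall n, (1 <= n)%nat ->
  infinite_sum (fun k => INR k * INR (k - 1) * xi n k) (g2 n).
Hypothesis HL : is_BPI_law xi (fun n => bernoulli (m1 n)) L.

Local Notation mu := (poisson_param rho m1).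
Local Notation w := (error_bound rho m1 g2).

Local Notation transition n m := (convol (convpow (xi (S n)) m) (bernoulli (m1 (S n)))).

Lemma transition_nonneg (n m k : nat) : 0 <= transition n m k.
Proof.
  destruct (Hxi (S n) ltac:(lia)) as [Hx0 _].
  apply convol_nonneg; intros j;
    [apply convpow_nonneg, Hx0|apply bernoulli_nonneg, Hm1; lia].
Qed.

Lemma law_nonneg (n k : nat) : 0 <= L n k.
Proof.
  destruct HL as [HL0 HLS]; revert k; induction n as [|n IH]; intros k.
  - rewrite HL0; apply delta0_nonneg.
  - apply (series_nonneg _ _ (fun m => Rmult_le_pos _ _ (IH m) (transition_nonneg n m k))).
    apply HLS.
Qed.

(* The pgf recursion F_{n+1}(s) = F_n(G_{n+1}(s)) (1 - m_{n+1} + m_{n+1} s),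
   obtained by summing the defining double series in the other order. *)
Lemma law_pgf_step (n : nat) (s G v : R) :
  0 <= s <= 1 -> 0 <= G -> pgf (xi (S n)) s G -> pgf (L n) G v ->
  pgf (L (S n)) s (v * (1 - m1 (S n) + m1 (S n) * s)).
Proof.
  intros Hs HG HGs Hv.
  destruct (Hxi (S n) ltac:(lia)) as [Hx0 _].
  set (B := 1 - m1 (S n) + m1 (S n) * s).
  unfold pgf; apply (series_fubini_nonneg (fun m k => L n m * transition n m k * s ^ k)
                                          (fun m => L n m * (G ^ m * B))).
  - intros m k; apply Rmult_le_pos; [apply Rmult_le_pos|apply pow_le; lra];
      [apply law_nonneg|apply transition_nonneg].
  - intros m.
    assert (Hrow : pgf (transition n m) s (G ^ m * B)).
    { apply pgf_convol; [intros k; apply convpow_nonneg, Hx0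
                        |intros k; apply bernoulli_nonneg, Hm1; lia
                        |lra|apply pgf_convpow; auto; lra|apply pgf_bernoulli]. }
    apply (series_ext (fun k => transition n m k * s ^ k * L n m)); [intros k; ring|].
    rewrite Rmult_comm; apply series_scal; exact Hrow.
  - intros k; apply series_scal, (proj2 HL).
  - apply (series_ext (fun m => L n m * G ^ m * B)); [intros m; ring|].
    apply series_scal; exact Hv.
Qed.

Lemma rho_nonneg (n : nat) : (1 <= n)%nat -> 0 <= rho n.
Proof.
  intros Hn; destruct (Hxi n Hn) as [Hx0 _].
  apply (series_nonneg _ _ (fun k => Rmult_le_pos _ _ (pos_INR k) (Hx0 k))), Hrho, Hn.
Qed.

Lemma g2_nonneg (n : nat) : (1 <= n)%nat -> 0 <= g2 n.
Proof.
  intros Hn; destruct (Hxi n Hn) as [Hx0 _].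
  apply (series_nonneg (fun k => INR k * INR (k - 1) * xi n k)); [|apply Hg2, Hn].
  intros k; pose proof (pos_INR k); pose proof (pos_INR (k - 1)); pose proof (Hx0 k).
  apply Rmult_le_pos; [apply Rmult_le_pos|]; assumption.
Qed.

Lemma poisson_param_nonneg (n : nat) : 0 <= mu n.
Proof.
  induction n as [|n IH]; cbn [poisson_param]; [lra|].
  pose proof (rho_nonneg (S n) ltac:(lia)); pose proof (Hm1 (S n) ltac:(lia)); nra.
Qed.

Lemma error_bound_nonneg (n : nat) : 0 <= w n.
Proof.
  induction n as [|n IH]; cbn [error_bound]; [lra|].
  pose proof (rho_nonneg (S n) ltac:(lia)); pose proof (g2_nonneg (S n) ltac:(lia)).
  pose proof (poisson_param_nonneg n); pose proof (Hm1 (S n) ltac:(lia)); nra.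
Qed.

Lemma law_pgf_approx (n : nat) (s : R) :
  0 <= s <= 1 ->
  exists v, pgf (L n) s v /\ Rabs (v - exp (mu n * (s - 1))) <= w n * (1 - s).
Proof.
  revert s; induction n as [|n IH]; intros s Hs.
  - exists 1; split; [rewrite (proj1 HL); apply pgf_delta0|].
    cbn [poisson_param error_bound].
    rewrite Rmult_0_l, exp_0, Rminus_diag, Rabs_R0; lra.
  - assert (Hn : (1 <= S n)%nat) by lia.
    destruct (pmf_pgf_exists (xi (S n)) s (Hxi _ Hn) Hs) as [G [HGs HG]].
    destruct (pgf_taylor _ _ _ _ _ (Hxi _ Hn) (Hrho _ Hn) (Hg2 _ Hn) Hs HGs) as [HG1 HG2].
    destruct (IH G HG) as [v [Hv Hvbound]].
    exists (v * (1 - m1 (S n) + m1 (S n) * s)); split.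
    + apply (law_pgf_step n s G v Hs (proj1 HG) HGs Hv).
    + cbn [poisson_param error_bound].
      apply (pgf_error_step v G); auto using rho_nonneg, poisson_param_nonneg, error_bound_nonneg.
Qed.

(* At s = 1 the estimate gives total mass 1, so each P(X_n = k) <= 1. *)
Lemma law_le_1 (n k : nat) : L n k <= 1.
Proof.
  destruct (law_pgf_approx n 1 ltac:(lra)) as [v [Hv Hvbound]].
  rewrite !Rminus_diag, Rmult_0_r, exp_0, Rmult_0_r in Hvbound.
  assert (Hv1 : v = 1).
  { apply Rminus_diag_uniq, Rabs_eq_0; pose proof (Rabs_pos (v - 1)); lra. }
  subst v; apply pgf_one_term_le; [apply law_nonneg|exact Hv].
Qed.

(* Hypotheses (i) and (ii) of the theorem, needed only for the limits. *)
Hypothesis Hlt1 : forall n, (1 <= n)%nat -> rho n < 1.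
Hypothesis Hlim1 : Un_cv rho 1.
Hypothesis Hdiv : cv_infty (fun N => sum_f_R0 (fun i => 1 - rho (S i)) N).
Hypothesis Hg2lim : Un_cv (fun n => g2 n / (1 - rho n)) 0.
Hypothesis Hmlim : Un_cv (fun n => m1 n / (1 - rho n)) lam.

Lemma rho_unit_interval (n : nat) : 0 <= rho (S n) <= 1.
Proof. split; [apply rho_nonneg|left; apply Hlt1]; lia. Qed.

(* mu_n is the relaxation sequence with inputs m_n / (1 - rho_n) -> lambda. *)
Lemma poisson_param_cv : Un_cv mu lam.
Proof.
  apply (relaxation_limit rho (fun n => m1 n / (1 - rho n)));
    [exact rho_unit_interval|exact Hdiv|exact Hmlim|].
  intros n; cbn [poisson_param]; pose proof (Hlt1 (S n) ltac:(lia)); field; lra.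
Qed.

(* w_n is the relaxation sequence with inputs
   mu_{n-1} G_n''(1) / (1 - rho_n) + (1 - rho_n) (m_n / (1 - rho_n))^2 -> 0. *)
Lemma error_bound_cv : Un_cv w 0.
Proof.
  set (ratio := fun k => m1 k / (1 - rho k)).
  apply (relaxation_limit rho
           (fun k => mu (pred k) * (g2 k / (1 - rho k)) + (1 - rho k) * ratio k * ratio k));
    [exact rho_unit_interval|exact Hdiv| |].
  - replace 0 with (lam * 0 + (1 - 1) * lam * lam) by ring.
    apply CV_plus; apply CV_mult; [|exact Hg2lim| |exact Hmlim].
    + apply (CV_shift _ 1); apply (Un_cv_ext mu); [|exact poisson_param_cv].
      intros n; rewrite Nat.add_1_r; reflexivity.
    + apply CV_mult; [exact (CV_minus _ _ _ _ (Un_cv_const 1) Hlim1)|exact Hmlim].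
  - intros n; unfold ratio; cbn [error_bound pred].
    pose proof (Hlt1 (S n) ltac:(lia)); field; lra.
Qed.

(* Uniform convergence of the pgfs on [0,1] gives convergence of each
   probability P(X_n = k). *)
Lemma law_cv (k : nat) : 0 <= lam -> Un_cv (fun n => L n k) (poisson lam k).
Proof.
  intros Hlam.
  set (d := fun n j => L n j - poisson lam j).
  assert (Hd : Un_cv (fun n => d n k) 0).
  { apply (coefficients_cv d (fun n => w n + Rabs (mu n - lam))).
    - intros n j; unfold d.
      pose proof (law_nonneg n j); pose proof (law_le_1 n j).
      pose proof (poisson_nonneg lam j Hlam); pose proof (poisson_le_1 lam j Hlam).
      apply Rabs_le; lra.
    - pose proof (CV_plus _ _ _ _ error_bound_cv
                    (cv_cvabs _ _ (CV_minus _ _ _ _ poisson_param_cv (Un_cv_const lam)))) as Hdelta.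
      rewrite Rminus_diag, Rabs_R0, Rplus_0_l in Hdelta; exact Hdelta.
    - intros n s Hs; destruct (law_pgf_approx n s ltac:(lra)) as [v [Hv Hvbound]].
      exists (v - exp (lam * (s - 1))); split.
      + apply (series_ext (fun j => L n j * s ^ j - poisson lam j * s ^ j)); [intros j; unfold d; ring|].
        exact (series_minus _ _ _ _ Hv (pgf_poisson lam s)).
      + pose proof (exp_param_lipschitz (mu n) lam s (poisson_param_nonneg n) Hlam ltac:(lra)).
        pose proof (Rabs_triang (v - exp (mu n * (s - 1))) (exp (mu n * (s - 1)) - exp (lam * (s - 1)))).
        replace (v - exp (mu n * (s - 1)) + (exp (mu n * (s - 1)) - exp (lam * (s - 1))))
          with (v - exp (lam * (s - 1))) in * by ring.
        pose proof (error_bound_nonneg n); nra. }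
  pose proof (CV_plus _ _ _ _ Hd (Un_cv_const (poisson lam k))) as Hsum.
  rewrite Rplus_0_l in Hsum.
  apply (Un_cv_ext (fun n => d n k + poisson lam k)); [intros n; unfold d; ring|exact Hsum].
Qed.

End BranchingWithImmigration.

Theorem theorem1
  (xi : nat -> nat -> R)      (* xi n = law of xi_{n,1} (n >= 1) *)
  (m1 : nat -> R)             (* eps_n ~ Bernoulli(m1 n) *)
  (rho g2 : nat -> R)         (* rho n = G_n'(1), g2 n = G_n''(1) *)
  (lam : R)
  (L : nat -> nat -> R)       (* L n = law of X_n *)
  (Hxi : forall n, (1 <= n)%nat -> is_pmf (xi n))
  (Hm1 : forall n, (1 <= n)%nat -> 0 <= m1 n <= 1)
  (Hrho : forall n, (1 <= n)%nat ->
            infinite_sum (fun k => INR k * xi n k) (rho n))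
  (Hg2 : forall n, (1 <= n)%nat ->
            infinite_sum (fun k => INR k * INR (k - 1) * xi n k) (g2 n))
  (Hlt1 : forall n, (1 <= n)%nat -> rho n < 1)
  (Hlim1 : Un_cv rho 1)
  (Hdiv : cv_infty (fun N => sum_f_R0 (fun i => 1 - rho (S i)) N))
  (Hg2lim : Un_cv (fun n => g2 n / (1 - rho n)) 0)
  (Hlam : 0 <= lam)
  (Hmlim : Un_cv (fun n => m1 n / (1 - rho n)) lam)
  (HL : is_BPI_law xi (fun n => bernoulli (m1 n)) L) :
  conv_in_dist L (poisson lam).
Proof.
  intros k; apply Un_cv_sum; intros j _.
  exact (law_cv xi m1 rho g2 lam L Hxi Hm1 Hrho Hg2 HL Hlt1 Hlim1 Hdiv Hg2lim Hmlim j Hlam).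
Qed.
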